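(* For every Stone space $X$ the Heisenberg group $H_X=(\mathbb{Z}_2\oplus V)\rtimes V^{*}$ is a minimal and non-archimedean topological group.
   Context: A Stone space is a compact zero-dimensional Hausdorff space. $\mathbb{Z}_2$ is the discrete two-element group. $V=C(X,\mathbb{Z}_2)$ is the Boolean group of continuous maps $X\to\mathbb{Z}_2$ (equivalently, clopen subsets of $X$ under symmetric difference) with the discrete topology. $V^*=\mathrm{Hom}(V,\mathbb{Z}_2)$ is the group of all homomorphisms $V\to\mathbb{Z}_2$ with the topology of pointwise convergence (a compact subgroup of $\mathbb{Z}_2^V$). $H_X$ is the set $\mathbb{Z}_2\times V\times V^*$ with the product topology and multiplication $(a_1,x_1,f_1)(a_2,x_2,f_2)=(a_1+a_2+f_1(x_2),\,x_1+x_2,\,f_1+f_2)$. A Hausdorff topological group is minimal if it admits no strictly coarser Hausdorff group topology. A topological group is non-archimedean if it has a local base at the identity consisting of open subgroups. *)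

From Stdlib Require Import List Bool Classical FunctionalExtensionality PropExtensionality.
Set Implicit Arguments.

Definition is_topology {T : Type} (O : (T -> Prop) -> Prop) : Prop :=
  O (fun _ => True) /\
  (forall U W, O U -> O W -> O (fun x => U x /\ W x)) /\
  (forall F : (T -> Prop) -> Prop,
      (forall U, F U -> O U) -> O (fun x => exists U, F U /\ U x)).

Definition continuous {A B : Type} (OA : (A -> Prop) -> Prop)
  (OB : (B -> Prop) -> Prop) (f : A -> B) : Prop :=
  forall U, OB U -> OA (fun x => U (f x)).

Definition hausdorff {T : Type} (O : (T -> Prop) -> Prop) : Prop :=
  forall x y : T, x <> y ->
    exists U W, O U /\ O W /\ U x /\ W y /\ (forall z, ~ (U z /\ W z)).

Definition compact {T : Type} (O : (T -> Prop) -> Prop) : Prop :=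
  forall F : (T -> Prop) -> Prop,
    (forall U, F U -> O U) ->
    (forall x, exists U, F U /\ U x) ->
    exists l : list (T -> Prop),
      (forall U, In U l -> F U) /\ (forall x, exists U, In U l /\ U x).

Definition clopen {T : Type} (O : (T -> Prop) -> Prop) (C : T -> Prop) : Prop :=
  O C /\ O (fun x => ~ C x).

Definition zero_dimensional {T : Type} (O : (T -> Prop) -> Prop) : Prop :=
  forall U x, O U -> U x -> exists C, clopen O C /\ C x /\ (forall y, C y -> U y).

Definition stone_space {T : Type} (O : (T -> Prop) -> Prop) : Prop :=
  is_topology O /\ compact O /\ zero_dimensional O /\ hausdorff O.

Definition discrete_top (T : Type) : (T -> Prop) -> Prop := fun _ => True.
Arguments discrete_top T _ : clear implicits.

Definition prod_top {A B : Type} (OA : (A -> Prop) -> Prop)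
  (OB : (B -> Prop) -> Prop) : ((A * B) -> Prop) -> Prop :=
  fun U => forall p, U p -> exists U1 U2, OA U1 /\ OB U2 /\ U1 (fst p) /\ U2 (snd p)
     /\ (forall a b, U1 a -> U2 b -> U (a, b)).

Definition pointwise_top {I Y : Type} (OY : (Y -> Prop) -> Prop)
  : ((I -> Y) -> Prop) -> Prop :=
  fun U => forall f, U f -> exists l : list (I * (Y -> Prop)),
    (forall iW, In iW l -> OY (snd iW) /\ snd iW (f (fst iW))) /\
    (forall g, (forall iW, In iW l -> snd iW (g (fst iW))) -> U g).

Definition sub_top {T : Type} {P : T -> Prop} (O : (T -> Prop) -> Prop)
  : ({x : T | P x} -> Prop) -> Prop :=
  fun U => exists W, O W /\ forall s, U s <-> W (proj1_sig s).

Definition is_group {G : Type} (mul : G -> G -> G) (inv : G -> G) (e : G) : Prop :=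
  (forall x y z, mul x (mul y z) = mul (mul x y) z) /\
  (forall x, mul e x = x) /\ (forall x, mul x e = x) /\
  (forall x, mul (inv x) x = e) /\ (forall x, mul x (inv x) = e).

Definition group_topology {G : Type} (mul : G -> G -> G) (inv : G -> G)
  (O : (G -> Prop) -> Prop) : Prop :=
  is_topology O /\
  continuous (prod_top O O) O (fun p => mul (fst p) (snd p)) /\
  continuous O O inv.

Definition hausdorff_group_topology {G : Type} (mul : G -> G -> G) (inv : G -> G)
  (O : (G -> Prop) -> Prop) : Prop :=
  group_topology mul inv O /\ hausdorff O.

Definition minimal_group_topology {G : Type} (mul : G -> G -> G) (inv : G -> G)
  (O : (G -> Prop) -> Prop) : Prop :=
  hausdorff_group_topology mul inv O /\
  forall O' : (G -> Prop) -> Prop,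
    hausdorff_group_topology mul inv O' ->
    (forall U, O' U -> O U) -> (forall U, O U -> O' U).

Definition is_subgroup {G : Type} (mul : G -> G -> G) (inv : G -> G) (e : G)
  (H : G -> Prop) : Prop :=
  H e /\ (forall x y, H x -> H y -> H (mul x y)) /\ (forall x, H x -> H (inv x)).

Definition non_archimedean {G : Type} (mul : G -> G -> G) (inv : G -> G) (e : G)
  (O : (G -> Prop) -> Prop) : Prop :=
  forall U, O U -> U e ->
    exists H, O H /\ is_subgroup mul inv e H /\ (forall x, H x -> U x).

Lemma top_ext {T : Type} (O : (T -> Prop) -> Prop) (U W : T -> Prop) :
  O U -> (forall x, U x <-> W x) -> O W.
Proof.
  intros HU HUW.
  replace W with U; [exact HU|].
  apply functional_extensionality; intro x; apply propositional_extensionality; auto.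
Qed.

Record StoneSpace : Type := {
  st_carrier :> Type;
  st_open : (st_carrier -> Prop) -> Prop;
  st_stone : stone_space st_open
}.

Lemma const_cont {X : Type} (OX : (X -> Prop) -> Prop) (b : bool) :
  is_topology OX -> continuous OX (discrete_top bool) (fun _ => b).
Proof.
  intros [Htop [_ Hun]] U _.
  destruct (classic (U b)) as [Hb|Hb].
  - apply (@top_ext _ OX _ _ Htop). intros; tauto.
  - specialize (Hun (fun _ => False) (fun _ H => match H with end)).
    apply (@top_ext _ OX _ _ Hun). intros x; split; [intros [W [[] _]] | tauto].
Qed.

Lemma xorb_cont {X : Type} (OX : (X -> Prop) -> Prop) (f g : X -> bool) :
  is_topology OX -> continuous OX (discrete_top bool) f ->
  continuous OX (discrete_top bool) g ->
  continuous OX (discrete_top bool) (fun x => xorb (f x) (g x)).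
Proof.
  intros Htop Hf Hg U _.
  destruct Htop as [Hfull [Hint Hun]].
  set (F := fun W : X -> Prop => exists b1 b2, U (xorb b1 b2) /\
              W = (fun x => f x = b1 /\ g x = b2)).
  assert (HF : forall W, F W -> OX W).
  { intros W [b1 [b2 [_ ->]]]. apply Hint.
    - exact (Hf (fun y => y = b1) I).
    - exact (Hg (fun y => y = b2) I). }
  apply (@top_ext _ OX _ _ (Hun F HF)). intros x; split.
  - intros [W [[b1 [b2 [Hb ->]]] [E1 E2]]]. rewrite E1, E2. exact Hb.
  - intros Hx. exists (fun y => f y = f x /\ g y = g x). split; [|split; reflexivity].
    exists (f x), (g x). split; [exact Hx | reflexivity].
Qed.

Section Heisenberg.
Variable X : StoneSpace.

Let Xtop : is_topology (st_open X) := proj1 (st_stone X).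

(* Z_2 is bool with xorb.  V = C(X, Z_2), continuous maps into discrete Z_2. *)
Definition Vsp : Type := {f : X -> bool | continuous (st_open X) (discrete_top bool) f}.

Definition Vzero : Vsp := exist _ (fun _ => false) (const_cont false Xtop).

Definition Vadd (u v : Vsp) : Vsp :=
  exist _ (fun x => xorb (proj1_sig u x) (proj1_sig v x))
    (xorb_cont Xtop (proj2_sig u) (proj2_sig v)).

Definition Vdual : Type :=
  {phi : Vsp -> bool | forall u v, phi (Vadd u v) = xorb (phi u) (phi v)}.

Lemma dual_zero_hom : forall u v : Vsp, false = xorb false false.
Proof. reflexivity. Qed.

Definition Vdzero : Vdual := exist _ (fun _ => false) dual_zero_hom.

Lemma dual_add_hom (p q : Vdual) : forall u v,
  xorb (proj1_sig p (Vadd u v)) (proj1_sig q (Vadd u v)) =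
  xorb (xorb (proj1_sig p u) (proj1_sig q u)) (xorb (proj1_sig p v) (proj1_sig q v)).
Proof.
  intros u v. rewrite (proj2_sig p), (proj2_sig q).
  destruct (proj1_sig p u), (proj1_sig q u), (proj1_sig p v), (proj1_sig q v); reflexivity.
Qed.

Definition Vdadd (p q : Vdual) : Vdual :=
  exist _ (fun u => xorb (proj1_sig p u) (proj1_sig q u)) (dual_add_hom p q).

Definition V_top : (Vsp -> Prop) -> Prop := discrete_top Vsp.
Definition Vdual_top : (Vdual -> Prop) -> Prop :=
  sub_top (pointwise_top (discrete_top bool)).

Definition HX : Type := bool * (Vsp * Vdual).

Definition HX_mul (p q : HX) : HX :=
  match p, q with
  | (a1, (x1, f1)), (a2, (x2, f2)) =>
      (xorb (xorb a1 a2) (proj1_sig f1 x2), (Vadd x1 x2, Vdadd f1 f2))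
  end.

Definition HX_inv (p : HX) : HX :=
  match p with (a, (x, f)) => (xorb a (proj1_sig f x), (x, f)) end.

Definition HX_one : HX := (false, (Vzero, Vdzero)).

Definition HX_top : (HX -> Prop) -> Prop :=
  prod_top (discrete_top bool) (prod_top V_top Vdual_top).

End Heisenberg.

From Stdlib Require Import List Bool Classical FunctionalExtensionality ProofIrrelevance.
Import ListNotations.

(* The sets {(0, 0, f) | f vanishes on L}, L a finite subset of V, are open subgroups
   forming a base at 1.  For minimality let O' be a coarser Hausdorff group topology and
   U0 an O'-neighbourhood of 1 missing the central element (1, 0, 0).  The commutator of
   (a, x, f) and (b, y, g) is the central element (f(y) + g(x), 0, 0), so continuity of
   commutators in O' gives O'-neighbourhoods of 1 on which f vanishes at finitely many
   given y (commute with (0, y, 0)) and, by compactness of X and continuity of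
   p |-> (0, 0, delta_p), on which x = 0 (commute with (0, 0, delta_p)).  The central
   coordinate is then killed by continuity of multiplication, as
   (a, 0, f) (0, 0, f) = (a, 0, 0).  So every basic neighbourhood of 1 is O'-open. *)

Lemma open_of_local {T : Type} (O : (T -> Prop) -> Prop) (S : T -> Prop) :
  is_topology O -> (forall x, S x -> exists U, O U /\ U x /\ forall y, U y -> S y) -> O S.
Proof.
  intros [_ [_ Hun]] H.
  specialize (Hun (fun U => O U /\ forall y, U y -> S y) (fun U HU => proj1 HU)).
  apply (top_ext _ _ _ Hun). intros x; split.
  - intros [U [[_ HU] Ux]]; auto.
  - intros Sx. destruct (H x Sx) as [U [HU [Ux HUS]]]. exists U; auto.
Qed.

Lemma open_nbhd_forall_list {T Idx : Type} (O : (T -> Prop) -> Prop) (x : T)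
  (Q : Idx -> T -> Prop) (l : list Idx) :
  is_topology O ->
  (forall i, In i l -> exists U, O U /\ U x /\ forall y, U y -> Q i y) ->
  exists U, O U /\ U x /\ forall y, U y -> forall i, In i l -> Q i y.
Proof.
  intros [Hfull [Hint _]] H. induction l as [|i l IH].
  - exists (fun _ => True). split; [exact Hfull|]. split; [exact I|]. intros _ _ _ [].
  - destruct IH as [M [HM [Mx HMQ]]]; [intros; apply H; right; auto|].
    destruct (H i (or_introl eq_refl)) as [U [HU [Ux HUQ]]].
    exists (fun y => U y /\ M y). split; [apply Hint; auto|]. split; [auto|].
    intros y [Uy My] j [<-|Hj]; auto.
Qed.

Lemma compact_finite_cover {T : Type} (O : (T -> Prop) -> Prop) (R : (T -> Prop) -> Prop) :
  compact O -> (forall x, exists W, O W /\ W x /\ R W) ->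
  exists l, (forall W, In W l -> R W) /\ forall x, exists W, In W l /\ W x.
Proof.
  intros Hc H. destruct (Hc (fun W => O W /\ R W)) as [l [Hl Hcov]].
  - intros W []; auto.
  - intros x. destruct (H x) as [W [HW [Wx RW]]]. exists W; auto.
  - exists l. split; [intros W HW; apply Hl, HW | exact Hcov].
Qed.

Definition comm {G : Type} (mul : G -> G -> G) (inv : G -> G) (u h : G) : G :=
  mul (mul (mul u h) (inv u)) (inv h).

Section TopologicalGroup.
Context {G : Type} {mul : G -> G -> G} {inv : G -> G} {O : (G -> Prop) -> Prop}.
Hypothesis Hgt : group_topology mul inv O.

Lemma mul_nbhds {W : G -> Prop} {a b : G} :
  O W -> W (mul a b) ->
  exists A B, O A /\ O B /\ A a /\ B b /\ forall x y, A x -> B y -> W (mul x y).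
Proof.
  destruct Hgt as [_ [Hm _]]. intros HW Hab.
  destruct (Hm W HW (a, b) Hab) as [U1 [U2 [H1 [H2 [H3 [H4 H5]]]]]].
  exists U1, U2. repeat split; auto.
Qed.

Lemma comm_nbhds {W : G -> Prop} {u0 h0 : G} :
  O W -> W (comm mul inv u0 h0) ->
  exists A B, O A /\ O B /\ A u0 /\ B h0 /\
    forall u h, A u -> B h -> W (comm mul inv u h).
Proof.
  unfold comm. intros HW H0.
  destruct (mul_nbhds HW H0) as [A1 [B1 [HA1 [HB1 [A1x [B1y H1]]]]]].
  destruct (mul_nbhds HA1 A1x) as [A2 [B2 [HA2 [HB2 [A2x [B2y H2]]]]]].
  destruct (mul_nbhds HA2 A2x) as [A3 [B3 [HA3 [HB3 [A3x [B3y H3]]]]]].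
  destruct Hgt as [[_ [Hint _]] [_ Hinv]].
  exists (fun x => A3 x /\ B2 (inv x)), (fun x => B3 x /\ B1 (inv x)).
  split; [apply Hint; [auto|apply Hinv; auto]|].
  split; [apply Hint; [auto|apply Hinv; auto]|].
  split; [auto|]. split; [auto|].
  intros u h [Hu1 Hu2] [Hh1 Hh2]. apply H1; auto.
Qed.

Lemma open_translate (M : G -> Prop) (a : G) : O M -> O (fun w => M (mul a w)).
Proof.
  intros HM. apply open_of_local; [exact (proj1 Hgt)|]. intros w Hw.
  destruct (mul_nbhds HM Hw) as [A [B [_ [HB [Aa [Bw HAB]]]]]].
  exists B. auto.
Qed.

End TopologicalGroup.

Lemma sig_fun_ext {A B : Type} {P : (A -> B) -> Prop} (u v : sig P) :
  (forall a, proj1_sig u a = proj1_sig v a) -> u = v.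
Proof.
  destruct u as [u hu], v as [v hv]; simpl; intro H.
  apply subset_eq_compat, functional_extensionality, H.
Qed.

Section Heisenberg.
Variable X : StoneSpace.

Local Notation H := (HX X).
Local Notation mulH := (@HX_mul X).
Local Notation invH := (@HX_inv X).
Local Notation oneH := (HX_one X).

Definition HX_center (a : bool) : H := (a, (Vzero X, Vdzero X)).

Lemma dual_zero (f : Vdual X) : proj1_sig f (Vzero X) = false.
Proof.
  pose proof (proj2_sig f (Vzero X) (Vzero X)) as Hf.
  replace (Vadd (Vzero X) (Vzero X)) with (Vzero X) in Hf by (apply sig_fun_ext; reflexivity).
  destruct (proj1_sig f (Vzero X)); simpl in *; congruence.
Qed.

Lemma HX_eq (a1 a2 : bool) (x1 x2 : Vsp X) (f1 f2 : Vdual X) :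
  a1 = a2 -> (forall p, proj1_sig x1 p = proj1_sig x2 p) ->
  (forall v, proj1_sig f1 v = proj1_sig f2 v) -> ((a1, (x1, f1)) : H) = (a2, (x2, f2)).
Proof. intros -> Hx Hf. rewrite (sig_fun_ext _ _ Hx), (sig_fun_ext _ _ Hf). reflexivity. Qed.

Ltac bool_cases := repeat match goal with
  | |- context [proj1_sig ?f ?v] => destruct (proj1_sig f v)
  | |- context [match ?b with true => _ | false => _ end] => destruct b
  end; reflexivity.

Lemma HX_group : is_group mulH invH oneH.
Proof.
  repeat split.
  - intros [a1 [x1 f1]] [a2 [x2 f2]] [a3 [x3 f3]]. apply HX_eq; simpl.
    + rewrite (proj2_sig f1). destruct a1, a2, a3; bool_cases.
    + intros p. bool_cases.
    + intros v. bool_cases.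
  - intros [a [x f]]. apply HX_eq; simpl; intros; rewrite ?dual_zero; destruct a; bool_cases.
  - intros [a [x f]]. apply HX_eq; simpl; intros; rewrite ?dual_zero; destruct a; bool_cases.
  - intros [a [x f]]. apply HX_eq; simpl; intros; rewrite ?(proj2_sig f); destruct a; bool_cases.
  - intros [a [x f]]. apply HX_eq; simpl; intros; destruct a; bool_cases.
Qed.

Lemma comm_HX a x f b y g :
  comm mulH invH (a, (x, f)) (b, (y, g)) = HX_center (xorb (proj1_sig f y) (proj1_sig g x)).
Proof. unfold comm; apply HX_eq; simpl; intros; destruct a, b; bool_cases. Qed.

Definition HX_basic (p : H) (L : list (Vsp X)) (q : H) : Prop :=
  fst q = fst p /\ fst (snd q) = fst (snd p) /\
  forall v, In v L -> proj1_sig (snd (snd q)) v = proj1_sig (snd (snd p)) v.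

Lemma HX_basic_refl p L : HX_basic p L p.
Proof. repeat split; auto. Qed.

Lemma HX_basic_open p L : HX_top (HX_basic p L).
Proof.
  intros q Hq.
  exists (fun b => b = fst q),
    (fun r => fst r = fst (snd q) /\
              forall v, In v L -> proj1_sig (snd r) v = proj1_sig (snd (snd q)) v).
  split; [exact I|]. split.
  - intros r Hr. exists (fun y => y = fst r),
      (fun s => forall v, In v L -> proj1_sig s v = proj1_sig (snd r) v).
    split; [exact I|]. split.
    + exists (fun g => forall v, In v L -> g v = proj1_sig (snd r) v). split.
      * intros g Hg. exists (map (fun v => (v, fun b => b = g v)) L). split.
        -- intros iW HiW. apply in_map_iff in HiW. destruct HiW as [v [<- _]].
           split; [exact I|reflexivity].
        -- intros g' Hg' v Hv. rewrite <- (Hg v Hv).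
           apply (Hg' (v, fun b => b = g v)). apply in_map_iff. exists v; auto.
      * intros s; tauto.
    + split; [reflexivity|]. split; [intros; reflexivity|].
      intros a b Ha Hb. destruct Hr as [Hr1 Hr2]. split; [rewrite Ha; exact Hr1|].
      intros v Hv. rewrite Hb by auto. auto.
  - destruct Hq as [Hq1 [Hq2 Hq3]].
    split; [reflexivity|]. split; [split; [reflexivity | intros; reflexivity]|].
    intros a b Ha [Hb1 Hb2]. split; [exact (eq_trans Ha Hq1)|]. split; [exact (eq_trans Hb1 Hq2)|].
    intros v Hv. simpl. rewrite Hb2 by auto. auto.
Qed.

Lemma HX_open_basic {W : H -> Prop} {p : H} :
  HX_top W -> W p -> exists L, forall q, HX_basic p L q -> W q.
Proof.
  intros HW Hp.
  destruct (HW p Hp) as [U1 [U2 [_ [HU2 [HU1p [HU2p Hall]]]]]].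
  destruct (HU2 _ HU2p) as [U21 [U22 [_ [HU22 [H21 [H22 Hall2]]]]]].
  destruct HU22 as [W' [HW' HiffW']].
  apply HiffW' in H22. destruct (HW' _ H22) as [l [Hl1 Hl2]].
  exists (map fst l). intros [a [x f]] [E1 [E2 E3]]. simpl in *.
  apply Hall; [rewrite E1; exact HU1p|]. apply Hall2; [rewrite E2; exact H21|].
  apply HiffW'. apply Hl2. intros iW HiW.
  rewrite E3 by (apply in_map_iff; exists iW; auto). apply Hl1; auto.
Qed.

Lemma HX_open_of_basic (W : H -> Prop) :
  (forall p, W p -> exists L, forall q, HX_basic p L q -> W q) -> HX_top W.
Proof.
  intros HW p Hp. destruct (HW p Hp) as [L HL].
  destruct (HX_basic_open p L p (HX_basic_refl p L)) as [U1 [U2 [H1 [H2 [H3 [H4 H5]]]]]].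
  exists U1, U2. repeat split; auto.
Qed.

Lemma HX_top_topology : is_topology (HX_top (X:=X)).
Proof.
  split; [|split].
  - apply HX_open_of_basic. intros p _. exists nil. intros; exact I.
  - intros U W HU HW. apply HX_open_of_basic. intros p [Hu Hw].
    destruct (HX_open_basic HU Hu) as [L1 H1]. destruct (HX_open_basic HW Hw) as [L2 H2].
    exists (L1 ++ L2). intros q [E1 [E2 E3]]. split.
    + apply H1. repeat split; auto. intros; apply E3, in_or_app; auto.
    + apply H2. repeat split; auto. intros; apply E3, in_or_app; auto.
  - intros F HF. apply HX_open_of_basic. intros p [U [HFU Hu]].
    destruct (HX_open_basic (HF U HFU) Hu) as [L HL]. exists L. intros q Hq. exists U; auto.
Qed.

Lemma HX_mul_continuous :
  continuous (prod_top (HX_top (X:=X)) (HX_top (X:=X))) (HX_top (X:=X))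
    (fun p => mulH (fst p) (snd p)).
Proof.
  intros W HW [p q] Hpq. destruct (HX_open_basic HW Hpq) as [L HL].
  exists (HX_basic p (fst (snd q) :: L)), (HX_basic q L).
  split; [apply HX_basic_open|]. split; [apply HX_basic_open|].
  split; [apply HX_basic_refl|]. split; [apply HX_basic_refl|].
  intros a b Ha Hb. apply HL.
  destruct p as [pa [px pf]], q as [qa [qx qf]], a as [aa [ax af]], b as [ba [bx bf]].
  destruct Ha as [Ha1 [Ha2 Ha3]], Hb as [Hb1 [Hb2 Hb3]]. simpl in *. subst.
  split; [|split]; simpl.
  - rewrite Ha3 by (left; reflexivity). reflexivity.
  - reflexivity.
  - intros v Hv. rewrite Ha3, Hb3 by (auto; right; auto). reflexivity.
Qed.

Lemma HX_inv_continuous : continuous (HX_top (X:=X)) (HX_top (X:=X)) invH.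
Proof.
  intros W HW. apply HX_open_of_basic. intros p Hp.
  destruct (HX_open_basic HW Hp) as [L HL].
  exists (fst (snd p) :: L). intros q Hq. apply HL.
  destruct p as [pa [px pf]], q as [qa [qx qf]].
  destruct Hq as [H1 [H2 H3]]. simpl in *. subst.
  split; [|split]; simpl.
  - rewrite H3 by (left; reflexivity). reflexivity.
  - reflexivity.
  - intros v Hv. rewrite H3 by (right; auto). reflexivity.
Qed.

Lemma HX_hausdorff : hausdorff (HX_top (X:=X)).
Proof.
  intros [a [x f]] [b [y g]] Hne.
  assert (exists L, forall z, ~ (HX_basic (a, (x, f)) L z /\ HX_basic (b, (y, g)) L z))
    as [L HL].
  { destruct (classic (a = b /\ x = y)) as [[-> ->]|Nab].
    - destruct (classic (exists v, proj1_sig f v <> proj1_sig g v)) as [[v Hv]|Nv].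
      + exists [v]. intros z [[_ [_ E1]] [_ [_ E2]]]. apply Hv. simpl in *.
        rewrite <- E1, <- E2 by (left; reflexivity). reflexivity.
      + exfalso. apply Hne. apply HX_eq; auto. intros v.
        apply NNPP. intro Hv. eauto.
    - exists nil. intros z [[E1 [E2 _]] [E3 [E4 _]]]. apply Nab. simpl in *. split; congruence. }
  exists (HX_basic (a, (x, f)) L), (HX_basic (b, (y, g)) L).
  repeat split; try apply HX_basic_open; auto.
Qed.

Lemma HX_basic_subgroup L : is_subgroup mulH invH oneH (HX_basic oneH L).
Proof.
  split; [apply HX_basic_refl|]. split.
  - intros [a [x f]] [b [y g]] [Ha [Hx Hf]] [Hb [Hy Hg]]. simpl in *. subst.
    split; [|split]; simpl.
    + rewrite dual_zero. reflexivity.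
    + apply sig_fun_ext. reflexivity.
    + intros v Hv. rewrite Hf, Hg by auto. reflexivity.
  - intros [a [x f]] [Ha [Hx Hf]]. simpl in *. subst.
    split; [|split]; simpl; rewrite ?dual_zero; auto.
Qed.

Lemma HX_non_archimedean : non_archimedean mulH invH oneH (HX_top (X:=X)).
Proof.
  intros U HU He. destruct (HX_open_basic HU He) as [L HL].
  exists (HX_basic oneH L). split; [apply HX_basic_open|]. split; [apply HX_basic_subgroup|exact HL].
Qed.

Lemma HX_basic_translate (z d : H) L :
  HX_basic oneH L d -> HX_basic z L (mulH z d).
Proof.
  destruct z as [a [x f]], d as [b [y g]]. intros [H1 [H2 H3]]. simpl in *. subst.
  split; [|split]; simpl.
  - rewrite dual_zero. destruct a; reflexivity.
  - apply sig_fun_ext. intros p; simpl. destruct (proj1_sig x p); reflexivity.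
  - intros v Hv. rewrite H3 by auto. simpl. destruct (proj1_sig f v); reflexivity.
Qed.

Definition delta (p : X) : Vdual X :=
  exist (fun phi : Vsp X -> bool => forall u v, phi (Vadd u v) = xorb (phi u) (phi v))
    (fun v : Vsp X => proj1_sig v p) (fun u v => eq_refl).

Definition HX_delta (p : X) : H := (false, (Vzero X, delta p)).
Definition HX_vec (y : Vsp X) : H := (false, (y, Vdzero X)).

Lemma HX_delta_continuous : continuous (st_open X) (HX_top (X:=X)) HX_delta.
Proof.
  destruct (st_stone X) as [Htop _].
  intros B HB. apply open_of_local; [exact Htop|]. intros p0 Hp0.
  destruct (HX_open_basic HB Hp0) as [L HL].
  destruct (open_nbhd_forall_list (st_open X) p0 (fun v p => proj1_sig v p = proj1_sig v p0) L Htop)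
    as [U [HU [Up0 HUL]]].
  { intros v _. exists (fun p => proj1_sig v p = proj1_sig v p0).
    split; [exact (proj2_sig v (fun b => b = proj1_sig v p0) I)|]. auto. }
  exists U. split; [exact HU|]. split; [exact Up0|].
  intros p Up. apply HL. split; [|split]; simpl; auto.
Qed.

Section CoarserTopology.
Variables (O' : (H -> Prop) -> Prop) (U0 : H -> Prop).
Hypothesis Hgt : group_topology mulH invH O'.
Hypothesis Hcoarser : forall U, O' U -> HX_top U.
Hypothesis HU0 : O' U0.
Hypothesis U0_one : U0 oneH.
Hypothesis U0_center : ~ U0 (HX_center true).

Lemma U0_center_false a : U0 (HX_center a) -> a = false.
Proof. destruct a; [intro Ha; contradiction|reflexivity]. Qed.

Lemma U0_comm_eval {a x f b y g} :
  U0 (comm mulH invH (a, (x, f)) (b, (y, g))) -> proj1_sig f y = proj1_sig g x.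
Proof.
  rewrite comm_HX. intros Hc. apply U0_center_false in Hc.
  destruct (proj1_sig f y), (proj1_sig g x); simpl in *; congruence.
Qed.

Lemma nbhd_vanishing_vec :
  exists M, O' M /\ M oneH /\ forall a x f, M (a, (x, f)) -> x = Vzero X.
Proof.
  destruct (st_stone X) as [Htop [Hcomp _]].
  set (R := fun W : X -> Prop => exists A, O' A /\ A oneH /\
              forall u p, A u -> W p -> U0 (comm mulH invH u (HX_delta p))).
  destruct (compact_finite_cover (st_open X) R Hcomp) as [l [Hl Hcov]].
  { intros p.
    assert (Hc : U0 (comm mulH invH oneH (HX_delta p))) by (unfold HX_one, HX_delta, HX_vec; rewrite comm_HX; exact U0_one).
    destruct (comm_nbhds Hgt HU0 Hc) as [A [B [HA [HB [Ae [Bp HAB]]]]]].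
    exists (fun q => B (HX_delta q)). split; [exact (HX_delta_continuous _ (Hcoarser _ HB))|].
    split; [exact Bp|]. exists A; auto. }
  destruct (open_nbhd_forall_list O' oneH
              (fun W u => forall p, W p -> U0 (comm mulH invH u (HX_delta p))) l
              (proj1 Hgt)) as [M [HM [Me HML]]].
  { intros W HW. destruct (Hl W HW) as [A [HA [Ae HAW]]]. exists A; auto. }
  exists M. split; [exact HM|]. split; [exact Me|].
  intros a x f Mu. apply sig_fun_ext. intros p.
  destruct (Hcov p) as [W [HW Wp]].
  pose proof (HML _ Mu W HW p Wp) as Hx. unfold HX_delta in Hx.
  apply U0_comm_eval in Hx. rewrite dual_zero in Hx. exact (eq_sym Hx).
Qed.

Lemma nbhd_vanishing_dual (L : list (Vsp X)) :
  exists M, O' M /\ M oneH /\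
    forall a x f, M (a, (x, f)) -> forall y, In y L -> proj1_sig f y = false.
Proof.
  destruct (open_nbhd_forall_list O' oneH (fun y u => U0 (comm mulH invH u (HX_vec y))) L
              (proj1 Hgt)) as [M [HM [Me HML]]].
  { intros y _.
    assert (Hc : U0 (comm mulH invH oneH (HX_vec y))) by (unfold HX_one, HX_delta, HX_vec; rewrite comm_HX; exact U0_one).
    destruct (comm_nbhds Hgt HU0 Hc) as [A [B [HA [_ [Ae [By HAB]]]]]].
    exists A. auto. }
  exists M. split; [exact HM|]. split; [exact Me|].
  intros a x f Mu y Hy. pose proof (HML _ Mu y Hy) as Hc. unfold HX_vec in Hc.
  exact (U0_comm_eval Hc).
Qed.

Lemma HX_mul_self_dual a (f : Vdual X) :
  mulH (a, (Vzero X, f)) (false, (Vzero X, f)) = HX_center a.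
Proof. apply HX_eq; simpl; intros; rewrite ?dual_zero; destruct a; bool_cases. Qed.

Lemma nbhd_in_basic (L : list (Vsp X)) :
  exists M, O' M /\ M oneH /\ forall q, M q -> HX_basic oneH L q.
Proof.
  assert (Hee : U0 (mulH oneH oneH)) by (rewrite (proj1 (proj2 HX_group)); exact U0_one).
  destruct (mul_nbhds Hgt HU0 Hee) as [A [B [HA [HB [Ae [Be HAB]]]]]].
  destruct (HX_open_basic (Hcoarser _ HB) Be) as [L1 HL1].
  destruct nbhd_vanishing_vec as [Mx [HMx [Mxe HMx0]]].
  destruct (nbhd_vanishing_dual (L ++ L1)) as [Mf [HMf [Mfe HMf0]]].
  destruct (proj1 Hgt) as [_ [Hint _]].
  exists (fun u => A u /\ Mx u /\ Mf u). split; [apply Hint; [|apply Hint]; auto|].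
  split; [auto|].
  intros [a [x f]] [Au [Mxu Mfu]].
  pose proof (HMx0 _ _ _ Mxu) as ->.
  pose proof (HMf0 _ _ _ Mfu) as Hf.
  assert (Bf : B (false, (Vzero X, f))).
  { apply HL1. split; [|split]; simpl; auto.
    intros v Hv. apply Hf, in_or_app. auto. }
  assert (Ha : a = false).
  { apply U0_center_false. rewrite <- (HX_mul_self_dual a f). apply HAB; auto. }
  subst a. split; [|split]; simpl; auto.
  intros v Hv. apply Hf, in_or_app. auto.
Qed.

Lemma HX_top_coarser_open (U : H -> Prop) : HX_top U -> O' U.
Proof.
  pose proof HX_group as [Hassoc [Hl1 [_ [Hli Hri]]]].
  intros HU. apply open_of_local; [exact (proj1 Hgt)|]. intros z Hz.
  destruct (HX_open_basic HU Hz) as [L HL].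
  destruct (nbhd_in_basic L) as [M [HM [Me HMb]]].
  exists (fun w => M (mulH (invH z) w)). split; [exact (open_translate Hgt M (invH z) HM)|].
  split; [rewrite Hli; exact Me|].
  intros w Mw. apply HL.
  replace w with (mulH z (mulH (invH z) w)) by (rewrite Hassoc, Hri, Hl1; reflexivity).
  apply HX_basic_translate, HMb, Mw.
Qed.

End CoarserTopology.

Lemma HX_minimal : minimal_group_topology mulH invH (HX_top (X:=X)).
Proof.
  split.
  - split; [|exact HX_hausdorff].
    split; [exact HX_top_topology|]. split; [exact HX_mul_continuous|exact HX_inv_continuous].
  - intros O' [Hgt Hhaus] Hcoarser.
    destruct (Hhaus oneH (HX_center true)) as [U0 [W0 [HU0 [_ [U0e [W0c Hdisj]]]]]].
    { discriminate. }
    apply (HX_top_coarser_open O' U0 Hgt Hcoarser HU0 U0e).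
    intro U0c. exact (Hdisj _ (conj U0c W0c)).
Qed.

End Heisenberg.

Theorem theorem4p1 (X : StoneSpace) :
  is_group (HX_mul (X:=X)) (HX_inv (X:=X)) (HX_one X) /\
  minimal_group_topology (HX_mul (X:=X)) (HX_inv (X:=X)) (HX_top (X:=X)) /\
  non_archimedean (HX_mul (X:=X)) (HX_inv (X:=X)) (HX_one X) (HX_top (X:=X)).
Proof.
  split; [exact (HX_group X)|]. split; [exact (HX_minimal X)|exact (HX_non_archimedean X)].
Qed.
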